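(* Let $X$ be a finite discrete space with at least two elements, $\Gamma$ a nonempty countable set, and $\varphi:\Gamma\to\Gamma$ a map having a non-quasi-periodic point. Then $(X^\Gamma,\sigma_\varphi)$ is uniform distributional chaotic.
   Context: $X^\Gamma$ has the product topology and a fixed compatible metric $d$; $\sigma_\varphi((x_\alpha)_{\alpha\in\Gamma})=(x_{\varphi(\alpha)})_{\alpha\in\Gamma}$. A point $\theta\in\Gamma$ is non-quasi-periodic if $\{\varphi^n(\theta):n\ge0\}$ is infinite. With $f=\sigma_\varphi$, $\xi(x,y,t,n)=\#\{i\in\{0,\dots,n-1\}:d(f^i(x),f^i(y))<t\}$, $F_{xy}(t)=\liminf_n\xi(x,y,t,n)/n$, $F^*_{xy}(t)=\limsup_n\xi(x,y,t,n)/n$. The system is uniform distributional chaotic if there exist an uncountable set $A\subseteq X^\Gamma$ and $\varepsilon>0$ such that for all distinct $x,y\in A$: $F^*_{xy}(s)=1$ for every $s>0$ and $F_{xy}(\varepsilon)=0$. *)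

From Stdlib Require Import Reals List.
From Coquelicot Require Import Coquelicot.
Open Scope R_scope.

Definition finite_type (X : Type) : Prop := exists l : list X, forall x : X, In x l.
Definition countable_type (G : Type) : Prop :=
  exists g : G -> nat, forall a b : G, g a = g b -> a = b.

Definition shift {X G : Type} (phi : G -> G) (x : G -> X) : G -> X :=
  fun a => x (phi a).

Definition non_quasi_periodic {G : Type} (phi : G -> G) (theta : G) : Prop :=
  ~ exists l : list G, forall n : nat, In (Nat.iter n phi theta) l.

Definition is_metric {T : Type} (d : T -> T -> R) : Prop :=
  (forall x y, 0 <= d x y) /\ (forall x y, d x y = 0 <-> x = y) /\
  (forall x y, d x y = d y x) /\ (forall x y z, d x z <= d x y + d y z).

Definition metric_open {T : Type} (d : T -> T -> R) (U : T -> Prop) : Prop :=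
  forall x, U x -> exists r, 0 < r /\ forall y, d x y < r -> U y.

(* open sets of the product topology on X^Gamma, X discrete:
   unions of cylinders fixing finitely many coordinates *)
Definition product_open {X G : Type} (U : (G -> X) -> Prop) : Prop :=
  forall x, U x -> exists F : list G,
    forall y, (forall a, In a F -> y a = x a) -> U y.

Definition compatible_metric {X G : Type} (d : (G -> X) -> (G -> X) -> R) : Prop :=
  is_metric d /\ forall U, product_open U <-> metric_open d U.

Definition xi {T : Type} (d : T -> T -> R) (f : T -> T) (x y : T) (t : R) (n : nat) : nat :=
  length (filter (fun i => if Rlt_dec (d (Nat.iter i f x) (Nat.iter i f y)) t
                           then true else false) (seq 0 n)).

Definition ratio {T : Type} d (f : T -> T) x y t : nat -> R :=
  fun n => INR (xi d f x y t n) / INR n.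

Definition Fl {T : Type} d (f : T -> T) x y t : Rbar := LimInf_seq (ratio d f x y t).
Definition Fu {T : Type} d (f : T -> T) x y t : Rbar := LimSup_seq (ratio d f x y t).

Definition uncountable {T : Type} (A : T -> Prop) : Prop :=
  ~ exists g : T -> nat, forall x y, A x -> A y -> g x = g y -> x = y.

Definition uniform_distributional_chaotic {T : Type} (d : T -> T -> R) (f : T -> T) : Prop :=
  exists (A : T -> Prop) (eps : R), 0 < eps /\ uncountable A /\
    forall x y, A x -> A y -> x <> y ->
      (forall s, 0 < s -> Fu d f x y s = Finite 1) /\ Fl d f x y eps = Finite 0.

(** Cut time into the blocks [k!, (k+1)!).  Since (k+1)!/k! -> oo, the block
    ending at n = (k+1)! fills all but a vanishing fraction of [0, n), even
    after trimming a bounded number of steps at either end.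

    To a bit sequence c attach the point x_c which equals b at the orbit point
    phi^n theta when the block of n carries a set bit, and a everywhere else.
    The bit of block k is 0 if its tag is 0 and c j if its tag is j + 1; every
    tag recurs infinitely often.  A finite set of coordinates enters the
    (injective) orbit of theta after boundedly many steps and at a bounded
    place, so deep inside block k the shifted point sigma^i x_c agrees on it
    with the constant a, or with the indicator u of the basin of the orbit,
    according to the bit of k.  Thus two such points are arbitrarily close
    throughout tag-0 blocks (F* = 1) and at distance at least d(a, u)/3
    throughout the blocks of tag j + 1 where c j <> c' j (F(d(a, u)/3) = 0);
    the same blocks show that c |-> x_c is injective. *)

From Stdlib Require Import Reals List Arith Lia Lra Psatz.
From Stdlib Require Import Classical ClassicalEpsilon FunctionalExtensionality.
From Coquelicot Require Import Coquelicot.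
Open Scope R_scope.

Lemma bool_sequences_uncountable :
  ~ exists h : (nat -> bool) -> nat, forall c c', h c = h c' -> c = c'.
Proof.
  intros [h h_inj].
  set (inv n := epsilon (inhabits (fun _ : nat => true)) (fun c => h c = n)).
  set (diag k := negb (inv k k)).
  assert (inv_diag : inv (h diag) = diag).
  { apply h_inj, (epsilon_spec _ (fun c => h c = h diag)). now exists diag. }
  assert (E : diag (h diag) = negb (inv (h diag) (h diag))) by reflexivity.
  rewrite inv_diag in E. destruct (diag (h diag)); discriminate.
Qed.

Lemma le_fact n : (n <= fact n)%nat.
Proof.
  induction n as [|n IH]; [simpl; lia|].
  change (fact (S n)) with (S n * fact n)%nat.
  pose proof (lt_O_fact n). rewrite <- (Nat.mul_1_r (S n)) at 1.
  apply Nat.mul_le_mono_l. lia.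
Qed.

Lemma fact_lt_fact_S k : (0 < k)%nat -> (fact k < fact (S k))%nat.
Proof.
  intros Hk. change (fact (S k)) with (fact k + k * fact k)%nat.
  pose proof (lt_O_fact k). nia.
Qed.

Lemma iter_shift {X G : Type} (phi : G -> G) (x : G -> X) i g :
  Nat.iter i (shift phi) x g = x (Nat.iter i phi g).
Proof.
  revert g; induction i as [|i IH]; intros g; [reflexivity|].
  simpl. unfold shift at 1. now rewrite IH, <- Nat.iter_succ_r.
Qed.

Lemma non_quasi_periodic_iter_inj {G : Type} (phi : G -> G) theta :
  non_quasi_periodic phi theta ->
  forall p q, Nat.iter p phi theta = Nat.iter q phi theta -> p = q.
Proof.
  intros Hnq.
  assert (no_return : forall p q, (p < q)%nat ->
            Nat.iter p phi theta <> Nat.iter q phi theta).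
  { intros p q Hpq E. apply Hnq.
    exists (map (fun n => Nat.iter n phi theta) (seq 0 q)).
    intros n. induction n as [n IH] using (well_founded_induction lt_wf).
    destruct (Nat.lt_ge_cases n q) as [Hn|Hn].
    - apply (in_map (fun n => Nat.iter n phi theta)), in_seq. lia.
    - replace (Nat.iter n phi theta) with (Nat.iter (n - q + p) phi theta).
      + apply IH. lia.
      + rewrite Nat.iter_add, E, <- Nat.iter_add. f_equal. lia. }
  intros p q E. destruct (Nat.lt_total p q) as [H|[H|H]]; auto.
  - now destruct (no_return p q H).
  - now destruct (no_return q p H).
Qed.

Lemma compatible_ball_cylinder {X G : Type} (d : (G -> X) -> (G -> X) -> R) :
  compatible_metric d -> forall w r, 0 < r ->
  exists F : list G, forall y, (forall g, In g F -> y g = w g) -> d w y < r.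
Proof.
  intros [[_ [Hzero [_ Htri]]] Hopen] w r Hr.
  assert (ball_open : metric_open d (fun y => d w y < r)).
  { intros y Hy. exists (r - d w y). split; [lra|].
    intros y' Hy'. pose proof (Htri w y y'). lra. }
  apply Hopen in ball_open. apply ball_open.
  assert (d w w = 0) by now apply Hzero. lra.
Qed.

(** * Frequencies along factorial blocks *)

Definition in_window (J M k i : nat) : Prop := (fact k + J <= i /\ i + M < fact (S k))%nat.

Lemma count_seq_S (p : nat -> bool) n :
  length (filter p (seq 0 (S n))) = (length (filter p (seq 0 n)) + if p n then 1 else 0)%nat.
Proof. rewrite seq_S, filter_app, length_app. simpl. now destruct (p n). Qed.

Lemma count_lower_of_interval (p : nat -> bool) lo hi n :
  (forall i, (lo <= i < hi)%nat -> p i = true) ->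
  (Nat.min n hi - lo <= length (filter p (seq 0 n)))%nat.
Proof.
  intros Hp. induction n as [|n IH]; [simpl; lia|].
  rewrite count_seq_S.
  destruct (le_lt_dec lo n), (lt_dec n hi); try rewrite (Hp n) by lia;
    destruct (p n); lia.
Qed.

Lemma count_upper_of_interval (p : nat -> bool) lo hi n :
  (forall i, (lo <= i < hi)%nat -> p i = false) ->
  (length (filter p (seq 0 n)) <= n - (Nat.min n hi - lo))%nat.
Proof.
  intros Hp. induction n as [|n IH]; [simpl; lia|].
  rewrite count_seq_S.
  destruct (le_lt_dec lo n), (lt_dec n hi); try rewrite (Hp n) by lia;
    destruct (p n); lia.
Qed.

Section Counting.

Context {T : Type} (d : T -> T -> R) (f : T -> T) (x y : T) (t : R).

Definition close_at (i : nat) : Prop := d (Nat.iter i f x) (Nat.iter i f y) < t.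

Lemma x_iwindow_lower J M k :
  (forall i, in_window J M k i -> close_at i) ->
  (fact (S k) - (fact k + J + M) <= xi d f x y t (fact (S k)))%nat.
Proof.
  intros Hclose. unfold xi.
  eapply Nat.le_trans;
    [|apply (count_lower_of_interval _ (fact k + J) (fact (S k) - M))]; [lia|].
  intros i Hi. destruct Rlt_dec as [_|Hfar]; [reflexivity|].
  exfalso. apply Hfar, Hclose. unfold in_window. lia.
Qed.

Lemma x_iwindow_upper J M k :
  (forall i, in_window J M k i -> ~ close_at i) ->
  (xi d f x y t (fact (S k)) <= fact k + J + M)%nat.
Proof.
  intros Hfar. unfold xi.
  eapply Nat.le_trans;
    [apply (count_upper_of_interval _ (fact k + J) (fact (S k) - M))|]; [|lia].
  intros i Hi. destruct Rlt_dec as [Hclose|_]; [|reflexivity].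
  exfalso. apply (Hfar i); [unfold in_window; lia|exact Hclose].
Qed.

Lemma ratio_bounds n : 0 <= ratio d f x y t n <= 1.
Proof.
  assert (Hle : (xi d f x y t n <= n)%nat).
  { unfold xi. rewrite <- (length_seq n 0) at 2. apply filter_length_le. }
  unfold ratio. destruct n as [|n].
  - replace (xi d f x y t 0) with 0%nat by lia. simpl. unfold Rdiv. lra.
  - apply le_INR in Hle. pose proof (pos_INR (xi d f x y t (S n))).
    assert (0 < INR (S n)) by (apply lt_0_INR; lia).
    split; [apply Rdiv_le_0_compat; lra|].
    apply (Rmult_le_reg_r (INR (S n))); [lra|]. unfold Rdiv.
    rewrite Rmult_assoc, Rinv_l, Rmult_1_r by lra. lra.
Qed.

End Counting.

Lemma nat_ratio_gt (a n C : nat) (del : R) :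
  (n - C <= a)%nat -> INR C < del * INR n -> 1 - del < INR a / INR n.
Proof.
  intros Ha Hsmall.
  assert (Hn : 0 < INR n).
  { destruct n; [simpl in Hsmall; pose proof (pos_INR C); lra|apply lt_0_INR; lia]. }
  assert (INR n - INR C <= INR a).
  { destruct (le_lt_dec C n).
    - rewrite <- minus_INR by lia. now apply le_INR.
    - apply lt_INR in l. pose proof (pos_INR a). lra. }
  apply (Rmult_lt_reg_r (INR n)); [lra|]. unfold Rdiv.
  rewrite Rmult_assoc, Rinv_l, Rmult_1_r by lra. lra.
Qed.

Lemma nat_ratio_lt (a n C : nat) (del : R) :
  (a <= C)%nat -> INR C < del * INR n -> INR a / INR n < del.
Proof.
  intros Ha Hsmall. apply le_INR in Ha.
  assert (Hn : 0 < INR n).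
  { destruct n; [simpl in Hsmall; pose proof (pos_INR C); lra|apply lt_0_INR; lia]. }
  apply (Rmult_lt_reg_r (INR n)); [lra|]. unfold Rdiv.
  rewrite Rmult_assoc, Rinv_l, Rmult_1_r by lra. lra.
Qed.

Lemma fact_block_dominates (K : nat -> Prop) (del : R) (C N : nat) : 0 < del ->
  (forall N', exists k, (N' <= k)%nat /\ K k) ->
  exists k, (N <= k)%nat /\ K k /\ INR (fact k + C) < del * INR (fact (S k)).
Proof.
  intros Hdel HK.
  destruct (INR_unbounded (INR (C + 1) / del)) as [k0 Hk0].
  destruct (HK (N + k0)%nat) as [k [Hk Kk]].
  exists k. split; [lia|split; [exact Kk|]].
  assert (Hfk : (fact k + C <= (C + 1) * fact k)%nat) by (pose proof (lt_O_fact k); nia).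
  apply le_INR in Hfk. rewrite mult_INR in Hfk.
  assert (HC : INR (C + 1) < del * INR (S k)).
  { assert (INR k0 <= INR (S k)) by (apply le_INR; lia).
    apply (Rmult_lt_compat_r del) in Hk0; [|lra].
    unfold Rdiv in Hk0. rewrite Rmult_assoc, Rinv_l, Rmult_1_r in Hk0 by lra. nra. }
  assert (0 < INR (fact k)) by (apply lt_0_INR, lt_O_fact).
  change (fact (S k)) with (S k * fact k)%nat. rewrite mult_INR. nra.
Qed.

Lemma Fu_eq_1_of_close_windows {T : Type} (d : T -> T -> R) f x y t J M
    (K : nat -> Prop) :
  (forall N, exists k, (N <= k)%nat /\ K k) ->
  (forall k i, K k -> in_window J M k i -> close_at d f x y t i) ->
  Fu d f x y t = Finite 1.
Proof.
  intros HK Hclose. apply is_LimSup_seq_unique. intros del. split.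
  - intros N.
    destruct (fact_block_dominates K del (J + M) N (cond_pos del) HK)
      as [k [Hk [Kk Hsmall]]].
    exists (fact (S k)). split; [pose proof (le_fact (S k)); lia|].
    apply (nat_ratio_gt _ _ (fact k + J + M)).
    + apply x_iwindow_lower. intros i. now apply Hclose.
    + now rewrite <- Nat.add_assoc.
  - exists 0%nat. intros n _. pose proof (ratio_bounds d f x y t n).
    pose proof (cond_pos del). lra.
Qed.

Lemma Fl_eq_0_of_far_windows {T : Type} (d : T -> T -> R) f x y t J M
    (K : nat -> Prop) :
  (forall N, exists k, (N <= k)%nat /\ K k) ->
  (forall k i, K k -> in_window J M k i -> ~ close_at d f x y t i) ->
  Fl d f x y t = Finite 0.
Proof.
  intros HK Hfar. apply is_LimInf_seq_unique. intros del. split.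
  - intros N.
    destruct (fact_block_dominates K del (J + M) N (cond_pos del) HK)
      as [k [Hk [Kk Hsmall]]].
    exists (fact (S k)). split; [pose proof (le_fact (S k)); lia|].
    rewrite Rplus_0_l. apply (nat_ratio_lt _ _ (fact k + J + M)).
    + apply x_iwindow_upper. intros i. now apply Hfar.
    + now rewrite <- Nat.add_assoc.
  - exists 0%nat. intros n _. pose proof (ratio_bounds d f x y t n).
    pose proof (cond_pos del). lra.
Qed.

(** * The scrambled set *)

Definition block_tag (k : nat) : nat := (k - Nat.sqrt k * Nat.sqrt k)%nat.

Lemma block_tag_hits j N : exists k, (N <= k)%nat /\ block_tag k = j.
Proof.
  exists ((N + j) * (N + j) + j)%nat.
  assert (Nat.sqrt ((N + j) * (N + j) + j) = (N + j)%nat)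
    by (apply Nat.sqrt_unique; nia).
  unfold block_tag. split; [nia|lia].
Qed.

Definition block_bit (c : nat -> bool) (k : nat) : bool :=
  match block_tag k with 0%nat => false | S j => c j end.

Definition in_block (k n : nat) : Prop := (fact k <= n < fact (S k))%nat.

Lemma in_block_unique k k' n : in_block k n -> in_block k' n -> k = k'.
Proof.
  unfold in_block. intros Hk Hk'.
  destruct (Nat.lt_total k k') as [H|[H|H]]; auto.
  - pose proof (fact_le (S k) k' H). lia.
  - pose proof (fact_le (S k') k H). lia.
Qed.

Definition marked (c : nat -> bool) (n : nat) : Prop :=
  exists k, in_block k n /\ block_bit c k = true.

Lemma marked_in_block c k n : in_block k n -> marked c n -> block_bit c k = true.
Proof. intros Hk [k' [Hk' Hbit]]. now rewrite (in_block_unique k k' n Hk Hk'). Qed.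

Section Construction.

Context {X G : Type} (phi : G -> G) (theta : G) (a b : X).
Hypothesis Hnq : non_quasi_periodic phi theta.
Hypothesis Hab : a <> b.

Definition orbit (n : nat) : G := Nat.iter n phi theta.

Definition chaotic_point (c : nat -> bool) : G -> X := fun g =>
  if excluded_middle_informative (exists n, g = orbit n /\ marked c n) then b else a.

Definition reaches_orbit (g : G) : Prop := exists j m, Nat.iter j phi g = orbit m.

Definition basin_indicator : G -> X := fun g =>
  if excluded_middle_informative (reaches_orbit g) then b else a.

Lemma chaotic_point_orbit c k n :
  in_block k n -> chaotic_point c (orbit n) = if block_bit c k then b else a.
Proof.
  intros Hk. unfold chaotic_point.
  destruct excluded_middle_informative as [[n' [E Hm]]|Hnot].
  - apply (non_quasi_periodic_iter_inj phi theta Hnq) in E. subst n'.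
    now rewrite (marked_in_block c k n Hk Hm).
  - destruct (block_bit c k) eqn:Hbit; [|reflexivity].
    exfalso. apply Hnot. exists n. split; [reflexivity|]. now exists k.
Qed.

Lemma chaotic_point_off_orbit c g : (forall n, g <> orbit n) -> chaotic_point c g = a.
Proof.
  intros Hoff. unfold chaotic_point.
  destruct excluded_middle_informative as [[n [E _]]|_]; [|reflexivity].
  now destruct (Hoff n).
Qed.

Lemma chaotic_point_inj c c' : chaotic_point c = chaotic_point c' -> c = c'.
Proof.
  intros E. apply functional_extensionality. intros j.
  destruct (block_tag_hits (S j) 1) as [k [Hk1 Hk]].
  assert (Hblock : in_block k (fact k)) by (pose proof (fact_lt_fact_S k Hk1); red; lia).
  pose proof (f_equal (fun x => x (orbit (fact k))) E) as Ej. simpl in Ej.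
  rewrite !(chaotic_point_orbit _ k _ Hblock) in Ej. unfold block_bit in Ej.
  rewrite Hk in Ej. destruct (c j), (c' j); congruence.
Qed.

Lemma entry_times_bounded (F : list G) : exists J M, forall g, In g F -> reaches_orbit g ->
  exists j m, (j <= J)%nat /\ (m <= M)%nat /\ Nat.iter j phi g = orbit m.
Proof.
  induction F as [|g0 F [J [M IH]]].
  - exists 0%nat, 0%nat. intros g [].
  - destruct (classic (reaches_orbit g0)) as [[j0 [m0 E0]]|Hno].
    + exists (J + j0)%nat, (M + m0)%nat. intros g [<-|Hg] Hg_reaches.
      * exists j0, m0. repeat split; auto; lia.
      * destruct (IH g Hg Hg_reaches) as [j [m [Hj [Hm E]]]].
        exists j, m. repeat split; auto; lia.
    + exists J, M. intros g [<-|Hg] Hg_reaches; [contradiction|auto].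
Qed.

Lemma shift_chaotic_point_window (F : list G) : exists J M, forall c k i g,
  In g F -> in_window J M k i ->
  Nat.iter i (shift phi) (chaotic_point c) g =
    if block_bit c k then basin_indicator g else a.
Proof.
  destruct (entry_times_bounded F) as [J [M HJM]].
  exists J, M. intros c k i g Hg [Hlo Hhi].
  rewrite iter_shift. unfold basin_indicator.
  destruct (excluded_middle_informative (reaches_orbit g)) as [Hr|Hr].
  - destruct (HJM g Hg Hr) as [j [m [Hj [Hm E]]]].
    assert (Horbit : Nat.iter i phi g = orbit (i - j + m)).
    { transitivity (Nat.iter (i - j) phi (Nat.iter j phi g)).
      - rewrite <- Nat.iter_add. f_equal. lia.
      - rewrite E. unfold orbit. now rewrite <- Nat.iter_add. }
    rewrite Horbit, (chaotic_point_orbit c k); [now destruct (block_bit c k)|].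
    red; lia.
  - rewrite chaotic_point_off_orbit; [now destruct (block_bit c k)|].
    intros n E. apply Hr. now exists i, n.
Qed.

Variable d : (G -> X) -> (G -> X) -> R.
Hypothesis Hd : compatible_metric d.

Lemma basin_indicator_far : 0 < d (fun _ => a) basin_indicator.
Proof.
  destruct Hd as [[Hpos [Hzero _]] _].
  destruct (Rle_lt_or_eq_dec _ _ (Hpos (fun _ => a) basin_indicator)) as [H|H]; auto.
  symmetry in H. apply Hzero in H.
  assert (Htheta : basin_indicator theta = b).
  { unfold basin_indicator. destruct excluded_middle_informative as [_|Hno]; auto.
    exfalso. apply Hno. now exists 0%nat, 0%nat. }
  exfalso. apply Hab. now rewrite <- Htheta, <- H.
Qed.

Lemma chaotic_points_Fu c c' s : 0 < s ->
  Fu d (shift phi) (chaotic_point c) (chaotic_point c') s = Finite 1.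
Proof.
  intros Hs. pose proof Hd as [[_ [_ [Hsym Htri]]] _].
  set (z := fun _ : G => a).
  destruct (compatible_ball_cylinder d Hd z (s / 2)) as [F HF]; [lra|].
  destruct (shift_chaotic_point_window F) as [J [M HW]].
  apply (Fu_eq_1_of_close_windows _ _ _ _ _ J M (fun k => block_tag k = 0%nat));
    [intros N; apply block_tag_hits|].
  intros k i Hk Hi.
  assert (near : forall c0, d z (Nat.iter i (shift phi) (chaotic_point c0)) < s / 2).
  { intros c0. apply HF. intros g Hg.
    rewrite (HW c0 k i g Hg Hi). unfold block_bit. now rewrite Hk. }
  pose proof (near c) as Hx. pose proof (near c') as Hy. unfold close_at.
  set (x_i := Nat.iter i (shift phi) (chaotic_point c)) in *.
  set (y_i := Nat.iter i (shift phi) (chaotic_point c')) in *.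
  pose proof (Htri x_i z y_i). rewrite (Hsym x_i z) in *. lra.
Qed.

Lemma chaotic_points_Fl c c' j : c j <> c' j ->
  Fl d (shift phi) (chaotic_point c) (chaotic_point c')
     (d (fun _ => a) basin_indicator / 3) = Finite 0.
Proof.
  intros Hj. pose proof Hd as [[_ [_ [Hsym Htri]]] _].
  pose proof basin_indicator_far as Hfar.
  set (z := fun _ : G => a) in *. set (u := basin_indicator) in *.
  set (eps := d z u / 3).
  destruct (compatible_ball_cylinder d Hd z eps) as [Fz HFz]; [unfold eps; lra|].
  destruct (compatible_ball_cylinder d Hd u eps) as [Fu HFu]; [unfold eps; lra|].
  destruct (shift_chaotic_point_window (Fz ++ Fu)) as [J [M HW]].
  apply (Fl_eq_0_of_far_windows _ _ _ _ _ J M (fun k => block_tag k = S j));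
    [intros N; apply block_tag_hits|].
  intros k i Hk Hi.
  set (center (bit : bool) := if bit then u else z).
  assert (near : forall c0,
            d (center (c0 j)) (Nat.iter i (shift phi) (chaotic_point c0)) < eps).
  { intros c0.
    assert (agree : forall g, In g (Fz ++ Fu) ->
              Nat.iter i (shift phi) (chaotic_point c0) g = center (c0 j) g).
    { intros g Hg. rewrite (HW c0 k i g Hg Hi). unfold block_bit, center.
      rewrite Hk. now destruct (c0 j). }
    unfold center in *. destruct (c0 j); [apply HFu|apply HFz];
      intros g Hg; apply agree, in_or_app; auto. }
  assert (centers_apart : d (center (c j)) (center (c' j)) = 3 * eps).
  { unfold center, eps. destruct (c j), (c' j); try congruence; [rewrite Hsym|]; lra. }
  pose proof (near c) as Hx. pose proof (near c') as Hy. unfold close_at.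
  set (x_i := Nat.iter i (shift phi) (chaotic_point c)) in *.
  set (y_i := Nat.iter i (shift phi) (chaotic_point c')) in *.
  pose proof (Htri (center (c j)) x_i (center (c' j))).
  pose proof (Htri x_i y_i (center (c' j))). rewrite (Hsym (center (c' j)) y_i) in Hy.
  lra.
Qed.

End Construction.

Theorem lemma3p4 (X G : Type) (phi : G -> G) :
  finite_type X -> (exists a b : X, a <> b) ->
  countable_type G -> inhabited G ->
  (exists theta : G, non_quasi_periodic phi theta) ->
  forall d : (G -> X) -> (G -> X) -> R, compatible_metric d ->
  uniform_distributional_chaotic d (shift phi).
Proof.
  intros _ [a [b Hab]] _ _ [theta Hnq] d Hd.
  exists (fun w => exists c, w = chaotic_point phi theta a b c),
         (d (fun _ => a) (basin_indicator phi theta a b) / 3).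
  split; [pose proof (basin_indicator_far phi theta a b Hab d Hd); lra|].
  split.
  - intros [g Hg]. apply bool_sequences_uncountable.
    exists (fun c => g (chaotic_point phi theta a b c)). intros c c' E.
    apply (chaotic_point_inj phi theta a b Hnq Hab), Hg; eauto.
  - intros x y [c ->] [c' ->] Hne.
    assert (Hj : exists j, c j <> c' j).
    { apply not_all_ex_not. intros Hall. apply Hne. f_equal.
      now apply functional_extensionality. }
    destruct Hj as [j Hj]. split.
    + intros s Hs. now apply chaotic_points_Fu.
    + now apply (chaotic_points_Fl phi theta a b Hnq Hab d Hd c c' j).
Qed.
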